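(* Let $n \ge 1$ be an integer and let $s(n,3)$ be the maximum cardinality of a Sidon-type set of strength 3 in $\mathbb{Z}_n$. Then: (i) $s(n,3) \ge \lfloor n/4 \rfloor$ if $n$ is even; (ii) $s(n,3) \ge \lfloor (n+1)/6 \rfloor$ if $n$ is odd and has no divisors congruent to $5 \bmod 6$; (iii) $s(n,3) \ge \frac{(p+1)n}{6p}$ if $n$ is odd and $p$ is its smallest divisor which is congruent to $5 \bmod 6$.
   Context: A subset $S \subseteq \mathbb{Z}_n$ (viewed as a set of integers in $[1,n]$) is a Sidon-type set of strength $t$ if no non-trivial sum $\varepsilon_1 x_1 + \cdots + \varepsilon_t x_t$, with $\varepsilon_i \in \{0,\pm1\}$ and $x_1,\dots,x_t \in S$ not necessarily distinct, is congruent to $0 \bmod n$. Such a sum is called non-trivial if at least one $\varepsilon_i$ is nonzero and no element of $S$ appears in it both with coefficient $+1$ and with coefficient $-1$. $s(n,t)$ denotes the maximum cardinality of a Sidon-type set of strength $t$ in $\mathbb{Z}_n$. *)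

From HB Require Import structures.
From mathcomp Require Import all_boot all_order all_algebra.
Set Implicit Arguments. Unset Strict Implicit. Unset Printing Implicit Defensive.
Import Order.TTheory GRing.Theory Num.Theory.

(* Coefficient encoding: k : 'I_3 stands for eps k = k - 1 in {-1, 0, 1}. *)
Definition eps (k : 'I_3) : int := (k%:Z - 1)%R.

(* Residues of Z_n are represented by 'I_n (values 0..n-1); a residue x
   corresponds to the integer representative in [1,n] congruent to x mod n,
   so congruence mod n is unaffected. *)

Definition nontrivial_sum (n t : nat) (x : {ffun 'I_t -> 'I_n})
    (e : {ffun 'I_t -> 'I_3}) : bool :=
  [exists i, eps (e i) != 0%R] &&
  [forall i, forall j, (x i == x j) ==> ~~ ((eps (e i) == 1%R) && (eps (e j) == (-1)%R))].

Definition sidon_type (n t : nat) (S : {set 'I_n}) : bool :=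
  [forall x : {ffun 'I_t -> 'I_n}, forall e : {ffun 'I_t -> 'I_3},
     ([forall i, x i \in S] && nontrivial_sum x e) ==>
     ~~ (n%:Z %| (\sum_(i < t) (eps (e i) * (x i)%:Z))%R)%Z].

Definition s (n t : nat) : nat :=
  \max_(S : {set 'I_n} | sidon_type t S) #|S|.

From HB Require Import structures.
From mathcomp Require Import all_boot all_order all_algebra.
From mathcomp Require Import zify ring.
Import Order.TTheory GRing.Theory Num.Theory.

(* For strength 3 it suffices that every signed sum +-x +-y +-z of elements
   that vanishes mod n has as many plus as minus signs: such a balanced sum is
   x - y with |x - y| < n, so it vanishes only if one element is both added
   and subtracted.  Balance follows from size and parity: residues in
   (p/3, p/2) have signed sums in (-3p/2, 3p/2) that hit 0 or +-p only when
   balanced, and for even n the unbalanced signed sums of odd numbers below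
   n/2 are odd or strictly between 0 and n in absolute value.  Balance modulo a
   divisor p of n passes to Z_n, so the preimage of the at least (p+1)/6
   residues in (p/3, p/2) has (n/p)(p+1)/6 elements. *)

Set Implicit Arguments.
Unset Strict Implicit.
Unset Printing Implicit Defensive.

Local Open Scope ring_scope.

Definition signs : seq int := [:: -1; 0; 1].

Lemma eps_sign (k : 'I_3) : eps k \in signs.
Proof. by case: k => [[|[|[|]]]]. Qed.

Lemma dvdz_small_multiple (n s : int) : 0 < n -> (n %| s)%Z ->
  - (2 * n) < s < 2 * n -> s = 0 \/ s = n \/ s = - n.
Proof.
move=> n_gt0 /dvdzP[q ->] /andP[lo hi].
have : -2 < q < 2 by rewrite -(ltr_pM2r n_gt0) -(ltr_pM2r n_gt0 q) mulNr lo hi.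
clear lo hi; case: q => [[|[|q]]|[|q]] //= _.
- by left; rewrite mul0r.
- by right; left; rewrite mul1r.
- by right; right; rewrite mulN1r.
Qed.

Lemma opposite_signsE (e f : int) : e \in signs -> f \in signs ->
  (e * f == -1) = (e == 1) && (f == -1) || (e == -1) && (f == 1).
Proof. by rewrite !inE => /or3P[]/eqP-> /or3P[]/eqP->. Qed.

Lemma sidon_type3_of_triples n (S : {set 'I_n}) :
  (forall (a b c : 'I_n) (e0 e1 e2 : int), a \in S -> b \in S -> c \in S ->
     e0 \in signs -> e1 \in signs -> e2 \in signs -> [|| e0 != 0, e1 != 0 | e2 != 0] ->
     (a = b :> nat -> e0 * e1 <> -1) -> (a = c :> nat -> e0 * e2 <> -1) ->
     (b = c :> nat -> e1 * e2 <> -1) ->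
     ~ (n%:Z %| e0 * a%:Z + e1 * b%:Z + e2 * c%:Z)%Z) ->
  sidon_type 3 S.
Proof.
move=> sumS; apply/forallP=> x; apply/forallP=> e; apply/implyP.
case/andP=> /forallP xS /andP[e_nz /forallP apart].
have apartP i j : x i = x j :> nat -> eps (e i) * eps (e j) <> -1.
  move=> /val_inj x_ij /eqP; rewrite opposite_signsE ?eps_sign //.
  have /forallP/(_ j) := apart i; have /forallP/(_ i) := apart j.
  by rewrite x_ij eqxx /= => /negbTE ji /negbTE ij; rewrite ij andbC ji.
rewrite !big_ord_recl big_ord0 addr0 addrA; apply/negP.
apply: sumS; rewrite ?eps_sign //; try exact: apartP.
by move: e_nz; rewrite -(big_orE xpredT) !big_ord_recl big_ord0 orbF.
Qed.

Definition balanced_zero_sums (n : nat) (A : pred nat) :=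
  forall a b c (e0 e1 e2 : int), A a -> A b -> A c ->
  e0 \in signs -> e1 \in signs -> e2 \in signs ->
  (n%:Z %| e0 * a%:Z + e1 * b%:Z + e2 * c%:Z)%Z -> e0 + e1 + e2 = 0.

Lemma sidon_type3_of_balanced n (A : pred nat) :
  balanced_zero_sums n A -> sidon_type 3 [set x : 'I_n | A x].
Proof.
move=> balA; apply: sidon_type3_of_triples => a b c e0 e1 e2.
rewrite !in_set => Aa Ab Ac s0 s1 s2 e_nz ab ac bc n_dvd.
have e_sum0 := balA _ _ _ _ _ _ Aa Ab Ac s0 s1 s2 n_dvd.
have n_gt0 : 0 < n%:Z by have := ltn_ord a; lia.
have := dvdz_small_multiple n_gt0 n_dvd.
have := ltn_ord a; have := ltn_ord b; have := ltn_ord c.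
move: s0 s1 s2 e_nz e_sum0 ab ac bc => /[!inE] /or3P[]/eqP-> /or3P[]/eqP-> /or3P[]/eqP-> //; lia.
Qed.

Lemma balanced_zero_sums_lift d n (A : pred nat) : (d %| n)%N ->
  balanced_zero_sums d A -> balanced_zero_sums n (fun x => A (x %% d)%N).
Proof.
move=> d_dvd_n balA a b c e0 e1 e2 Aa Ab Ac s0 s1 s2 n_dvd.
apply: balA Aa Ab Ac s0 s1 s2 _.
have d_dvd : (d%:Z %| e0 * a%:Z + e1 * b%:Z + e2 * c%:Z)%Z.
  by apply: dvdz_trans n_dvd; rewrite dvdzE.
have -> : e0 * (a %% d)%N%:Z + e1 * (b %% d)%N%:Z + e2 * (c %% d)%N%:Z =
    e0 * a%:Z + e1 * b%:Z + e2 * c%:Z -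
    (e0 * (a %/ d)%N%:Z + e1 * (b %/ d)%N%:Z + e2 * (c %/ d)%N%:Z) * d%:Z.
  by rewrite {2}(divn_eq a d) {2}(divn_eq b d) {2}(divn_eq c d) !PoszD !PoszM; ring.
by rewrite rpredB // dvdz_mull.
Qed.

Definition third_to_half (p r : nat) : bool := (p < 3 * r)%N && (2 * r < p)%N.

Lemma balanced_third_to_half p : balanced_zero_sums p (third_to_half p).
Proof.
move=> a b c e0 e1 e2 /andP[a_lo a_hi] /andP[b_lo b_hi] /andP[c_lo c_hi] s0 s1 s2 p_dvd.
have p_gt0 : 0 < p%:Z by lia.
have := dvdz_small_multiple p_gt0 p_dvd.
by move: s0 s1 s2 => /[!inE] /or3P[]/eqP-> /or3P[]/eqP-> /or3P[]/eqP->; lia.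
Qed.

Lemma balanced_odd_below_half n : ~~ odd n ->
  balanced_zero_sums n (fun x => odd x && (2 * x < n)%N).
Proof.
move=> n_even a b c e0 e1 e2 /andP[a_odd a_lt] /andP[b_odd b_lt] /andP[c_odd c_lt].
move=> s0 s1 s2 n_dvd.
have n_gt0 : 0 < n%:Z by lia.
have := dvdz_small_multiple n_gt0 n_dvd.
by move: s0 s1 s2 => /[!inE] /or3P[]/eqP-> /or3P[]/eqP-> /or3P[]/eqP->; lia.
Qed.

Local Close Scope ring_scope.

Lemma card_set_ord n (A : pred nat) : #|[set x : 'I_n | A x]| = count A (iota 0 n).
Proof.
rewrite cardsE cardE /enum_mem -enumT size_filter -val_enum_ord count_map.
exact: eq_count.
Qed.

Lemma count_modn_iota p m (A : pred nat) :
  count (fun x => A (x %% p)) (iota 0 (m * p)) = m * count A (iota 0 p).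
Proof.
elim: m => [|m IHm] //; rewrite !mulSnr iotaD count_cat IHm add0n.
rewrite -[in iota (m * p) p](addn0 (m * p)) iotaDl count_map.
congr (_ + _); apply: eq_in_count => x; rewrite mem_iota /= => x_lt_p.
by rewrite modnMDl modn_small.
Qed.

Lemma count_iota_inj n k (A : pred nat) (f : nat -> nat) :
  {in gtn k &, injective f} -> (forall i, i < k -> (f i < n) && A (f i)) ->
  k <= count A (iota 0 n).
Proof.
move=> f_inj f_in; rewrite -size_filter -[k](size_iota 0) -(size_map f).
apply: uniq_leq_size => [|y /mapP[i]].
  by rewrite map_inj_in_uniq ?iota_uniq // => i j; rewrite !mem_iota; exact: f_inj.
by rewrite mem_iota => /f_in/andP[fi_lt Afi] ->; rewrite mem_filter Afi mem_iota.
Qed.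

Lemma count_odd_below_half n : n %/ 4 <= count (fun x => odd x && (2 * x < n)) (iota 0 n).
Proof.
by apply: (@count_iota_inj _ _ _ (fun i => 2 * i + 1)) => [i j _ _ /= | i i_lt]; lia.
Qed.

Lemma count_third_to_half p : odd p -> (p + 1) %/ 6 <= count (third_to_half p) (iota 0 p).
Proof.
move=> p_odd; rewrite /third_to_half.
by apply: (@count_iota_inj _ _ _ (fun i => p %/ 3 + 1 + i)) => [i j _ _ /= | i i_lt]; lia.
Qed.

Lemma sidon_type_card_le n t (S : {set 'I_n}) : sidon_type t S -> #|S| <= s n t.
Proof. exact: (leq_bigmax_cond (F := fun S : {set 'I_n} => #|S|)). Qed.

Lemma even_lower_bound n : ~~ odd n -> n %/ 4 <= s n 3.
Proof.
move=> n_even; apply: leq_trans (count_odd_below_half n) _.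
rewrite -card_set_ord.
exact: sidon_type_card_le (sidon_type3_of_balanced (balanced_odd_below_half n_even)).
Qed.

Lemma divisor_lower_bound n p : p %| n -> odd p -> n %/ p * ((p + 1) %/ 6) <= s n 3.
Proof.
move=> p_dvd_n p_odd.
have S_sidon := sidon_type3_of_balanced
  (balanced_zero_sums_lift p_dvd_n (@balanced_third_to_half p)).
apply: leq_trans (sidon_type_card_le S_sidon).
rewrite (card_set_ord _ (fun x => third_to_half p (x %% p))) -{2}(divnK p_dvd_n).
by rewrite count_modn_iota leq_mul2l count_third_to_half ?orbT.
Qed.

Theorem theorem4p1 (n : nat) (hn : 1 <= n) :
  [/\ (~~ odd n -> n %/ 4 <= s n 3),
      (odd n -> (forall d, d %| n -> d %% 6 != 5) -> (n + 1) %/ 6 <= s n 3)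
    & (forall p : nat, odd n -> p %| n -> p %% 6 = 5 ->
         (forall d, d %| n -> d %% 6 = 5 -> p <= d) ->
         (((p + 1) * n)%:R / (6 * p)%:R <= (s n 3)%:R :> rat)%R)].
Proof.
split=> [|n_odd _|p n_odd p_dvd_n p_mod6 _]; first exact: even_lower_bound.
  by have := divisor_lower_bound (dvdnn n) n_odd; rewrite divnn hn mul1n.
have -> : (p + 1) * n = n %/ p * ((p + 1) %/ 6) * (6 * p).
  have p1_6 : p + 1 = (p + 1) %/ 6 * 6 by lia.
  by rewrite {1}p1_6 -{1}(divnK p_dvd_n); ring.
rewrite natrM mulfK ?ler_nat; last by rewrite pnatr_eq0; lia.
exact/divisor_lower_bound/(dvdn_odd p_dvd_n).
Qed.
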